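(* Let $A_t$, $t\in I$ ($I$ an interval containing $0$), solve the ODE $\dot A_t=A_t[A_t,A_t^*]$ in $\mathfrak{gl}_n(\mathbb C)$. Then $\operatorname{spec}A_t=\operatorname{spec}A_0$ for all $t\in I$.
   Context: $A^*$ is the conjugate transpose, $[X,Y]=XY-YX$, and $\operatorname{spec}$ denotes the set of eigenvalues (the proof in fact gives equality of characteristic polynomials). *)

From HB Require Import structures.
From mathcomp Require Import all_boot all_order all_algebra.
From mathcomp Require Import all_classical all_reals all_analysis.
From mathcomp Require Import complex.
Set Implicit Arguments. Unset Strict Implicit. Unset Printing Implicit Defensive.
Import Order.TTheory GRing.Theory Num.Theory.
Import numFieldNormedType.Exports.
Local Open Scope classical_set_scope.
Local Open Scope ring_scope.

Definition adjC (R : rcfType) (m n : nat) (A : 'M[R[i]]_(m, n)) : 'M[R[i]]_(n, m) :=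
  (map_mx (@conjc R) A)^T.

Definition commC (R : rcfType) (n : nat) (X Y : 'M[R[i]]_n) : 'M[R[i]]_n :=
  X *m Y - Y *m X.

(* f : R -> R has derivative d at t relative to the set I
   (one-sided at endpoints of an interval): the difference quotient
   tends to d as s -> t, s in I, s <> t. *)
Definition has_deriv_within (R : realType) (I : set R) (f : R -> R) (t d : R) : Prop :=
  (fun s => (s - t)^-1 * (f s - f t)) @ within I (t^') --> d.

Definition cderiv_within (R : realType) (I : set R) (f : R -> R[i]) (t : R) (d : R[i]) : Prop :=
  has_deriv_within I (fun s => complex.Re (f s)) t (complex.Re d) /\
  has_deriv_within I (fun s => complex.Im (f s)) t (complex.Im d).

Definition solves_flow (R : realType) (n : nat) (I : set R) (A : R -> 'M[R[i]]_n) : Prop :=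
  forall t, I t -> forall i j : 'I_n,
    cderiv_within I (fun s => A s i j)
      t ((A t *m commC (A t) (adjC (A t))) i j).

From HB Require Import structures.
From mathcomp Require Import all_boot all_order all_algebra.
From mathcomp Require Import all_classical all_reals all_analysis.
From mathcomp Require Import complex.
From mathcomp Require Import ring.
From mathcomp Require Import fingroup perm.
Import Order.TTheory GRing.Theory Num.Theory.
Import numFieldNormedType.Exports.
Set Implicit Arguments. Unset Strict Implicit. Unset Printing Implicit Defensive.
Local Open Scope classical_set_scope.
Local Open Scope ring_scope.

(* Since A [A, A^*] = [A, A A^*], the flow has Lax form A' = [A, Y].  By Jacobi's
   formula, d/dt det (z - A) = - tr (adj (z - A) [A, Y]) = - tr ([adj (z - A), A] Y),
   which vanishes because adj (z - A) commutes with A.  So every value of the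
   characteristic polynomial has zero derivative on the interval I, hence is
   constant there by the mean value theorem applied to its real and imaginary parts. *)

Section RealDerivative.
Variables (R : realType) (I : set R).
Implicit Types f g : R -> R.

Lemma eq_has_deriv_within f g t d :
  f =1 g -> has_deriv_within I f t d -> has_deriv_within I g t d.
Proof. by move=> /funext ->. Qed.

Lemma has_deriv_within_cvg f t d :
  has_deriv_within I f t d -> f @ within I t^' --> f t.
Proof.
move=> df.
have f_expand : \forall s \near t, s != t -> I s ->
    f t + (s - t) * ((s - t)^-1 * (f s - f t)) = f s.
  near=> s => st _.
  by rewrite mulrA mulfV ?mul1r ?subr_eq0 // addrC subrK.
suff : (fun s => f t + (s - t) * ((s - t)^-1 * (f s - f t))) @ within I t^' -->
    f t + 0 * d.
  by rewrite mul0r addr0; apply: cvg_trans; exact: near_eq_cvg.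
apply: cvgD; first exact: cvg_cst.
apply: cvgM df; apply: cvg_within_filter; apply: cvg_within_filter.
have : (fun s => s - t) @ t --> t - t by apply: cvgB; [exact: cvg_id | exact: cvg_cst].
by rewrite subrr.
Unshelve. all: by end_near. Qed.

Lemma has_deriv_within_is_derive f t d : (\forall s \near t, I s) ->
  has_deriv_within I f t d -> is_derive t 1 f d.
Proof.
move=> It df.
have dq : (fun h => h^-1 *: ((f \o shift t) (h *: 1) - f t)) @ 0^' --> d.
  move=> P /df dfP.
  have : \forall s \near t, s != t -> P ((s - t)^-1 * (f s - f t)).
    by move: It dfP; apply: filterS2 => s Is dfPs st; exact: dfPs.
  rewrite (near_shift 0 t); apply: filterS => h Ph h0 /=.
  move: Ph; rewrite /= subr0 addrK -[h%:A]/(h * 1) mulr1; apply.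
  by rewrite -subr_eq0 addrK.
by apply: DeriveDef; [apply/cvg_ex; exists d | exact: cvg_lim].
Qed.

Lemma has_deriv_within0_constant f : is_interval I ->
  (forall t, I t -> has_deriv_within I f t 0) ->
  forall a b, I a -> I b -> f a = f b.
Proof.
move=> iI df a b Ia Ib; wlog ab : a b Ia Ib / a < b.
  by move=> wl; case: (ltgtP a b) => [|/wl/esym|->]; [exact: wl|apply|].
have Iab z : a <= z <= b -> I z by exact: (iI a b).
have df_int x : x \in `]a, b[ -> is_derive x 1 f 0.
  move=> xab; apply: has_deriv_within_is_derive (df x _).
    apply: filterS (near_in_itvoo xab) => z zab.
    by apply: Iab; rewrite !ltW ?(itvP zab).
  by apply: Iab; rewrite !ltW ?(itvP xab).
have f_cont : {within `[a, b], continuous f}.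
  apply/continuous_within_itvP => //; split.
  - move=> x /df_int dfx.
    exact/differentiable_continuous/derivable1_diffP/(@ex_derive _ _ _ _ _ _ _ dfx).
  - apply: cvg_trans (cvg_fmap2 _) (has_deriv_within_cvg (df a Ia)).
    move=> P; apply: filterS2 (lt_nbhsl ab) => s sb Ps a_s.
    by apply: Ps; [rewrite gt_eqF | apply: Iab; rewrite !ltW].
  - apply: cvg_trans (cvg_fmap2 _) (has_deriv_within_cvg (df b Ib)).
    move=> P; apply: filterS2 (lt_nbhsr ab) => s a_s Ps sb.
    by apply: Ps; [rewrite lt_eqF | apply: Iab; rewrite !ltW].
have [c _] := MVT ab df_int f_cont.
by rewrite mul0r => /eqP; rewrite subr_eq0 => /eqP.
Qed.

Lemma has_deriv_within_cst t c : has_deriv_within I (fun=> c) t 0.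
Proof.
rewrite /has_deriv_within (_ : (fun s => _) = fun=> 0); first exact: cvg_cst.
by apply: funext => s; rewrite subrr mulr0.
Qed.

Lemma has_deriv_withinD f g t df dg :
  has_deriv_within I f t df -> has_deriv_within I g t dg ->
  has_deriv_within I (fun s => f s + g s) t (df + dg).
Proof.
move=> Df Dg; rewrite /has_deriv_within.
have -> : (fun s => (s - t)^-1 * (f s + g s - (f t + g t))) =
    (fun s => (s - t)^-1 * (f s - f t) + (s - t)^-1 * (g s - g t)).
  by apply: funext => s; ring.
exact: cvgD Df Dg.
Qed.

Lemma has_deriv_withinN f t df : has_deriv_within I f t df ->
  has_deriv_within I (fun s => - f s) t (- df).
Proof.
move=> Df; rewrite /has_deriv_within.
have -> : (fun s => (s - t)^-1 * (- f s - - f t)) =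
    (fun s => - ((s - t)^-1 * (f s - f t))).
  by apply: funext => s; ring.
exact: cvgN Df.
Qed.

Lemma has_deriv_withinM f g t df dg :
  has_deriv_within I f t df -> has_deriv_within I g t dg ->
  has_deriv_within I (fun s => f s * g s) t (f t * dg + df * g t).
Proof.
move=> Df Dg; rewrite /has_deriv_within.
have -> : (fun s => (s - t)^-1 * (f s * g s - f t * g t)) =
    (fun s => f s * ((s - t)^-1 * (g s - g t)) + (s - t)^-1 * (f s - f t) * g t).
  by apply: funext => s; ring.
apply: cvgD; first exact: cvgM (has_deriv_within_cvg Df) Dg.
exact: cvgM Df (cvg_cst _).
Qed.

End RealDerivative.

Section ComplexDerivative.
Variables (R : realType) (I : set R).
Local Notation C := R[i].
Local Notation Re := complex.Re.
Local Notation Im := complex.Im.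
Implicit Types F G : R -> C.

Lemma ReM (x y : C) : Re (x * y) = Re x * Re y - Im x * Im y.
Proof. by case: x => a b; case: y => c d. Qed.

Lemma ImM (x y : C) : Im (x * y) = Re x * Im y + Im x * Re y.
Proof. by case: x => a b; case: y => c d. Qed.

Lemma cderiv_within0_constant F : is_interval I ->
  (forall t, I t -> cderiv_within I F t 0) ->
  forall a b, I a -> I b -> F a = F b.
Proof.
move=> iI dF a b Ia Ib; apply/eqP; rewrite eq_complex.
rewrite (has_deriv_within0_constant iI (fun t It => (dF t It).1) Ia Ib).
by rewrite (has_deriv_within0_constant iI (fun t It => (dF t It).2) Ia Ib) !eqxx.
Qed.

Lemma cderiv_within_cst t (c : C) : cderiv_within I (fun=> c) t 0.
Proof. by split; apply: has_deriv_within_cst. Qed.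

Lemma cderiv_withinD F G t dF dG :
  cderiv_within I F t dF -> cderiv_within I G t dG ->
  cderiv_within I (fun s => F s + G s) t (dF + dG).
Proof.
move=> [DF1 DF2] [DG1 DG2]; split; rewrite raddfD /=.
- by apply: eq_has_deriv_within (has_deriv_withinD DF1 DG1) => s; rewrite raddfD.
- by apply: eq_has_deriv_within (has_deriv_withinD DF2 DG2) => s; rewrite raddfD.
Qed.

Lemma cderiv_withinN F t dF : cderiv_within I F t dF ->
  cderiv_within I (fun s => - F s) t (- dF).
Proof.
move=> [DF1 DF2]; split; rewrite raddfN.
- by apply: eq_has_deriv_within (has_deriv_withinN DF1) => s; rewrite raddfN.
- by apply: eq_has_deriv_within (has_deriv_withinN DF2) => s; rewrite raddfN.
Qed.

Lemma cderiv_withinM F G t dF dG :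
  cderiv_within I F t dF -> cderiv_within I G t dG ->
  cderiv_within I (fun s => F s * G s) t (F t * dG + dF * G t).
Proof.
move=> [DF1 DF2] [DG1 DG2]; split.
- have -> : Re (F t * dG + dF * G t) = Re (F t) * Re dG + Re dF * Re (G t)
                                      - (Im (F t) * Im dG + Im dF * Im (G t)).
    by rewrite raddfD /= !ReM; ring.
  apply: eq_has_deriv_within (has_deriv_withinD (has_deriv_withinM DF1 DG1)
    (has_deriv_withinN (has_deriv_withinM DF2 DG2))) => s.
  by rewrite ReM.
- have -> : Im (F t * dG + dF * G t) = Re (F t) * Im dG + Re dF * Im (G t)
                                      + (Im (F t) * Re dG + Im dF * Re (G t)).
    by rewrite raddfD /= !ImM; ring.
  apply: eq_has_deriv_within (has_deriv_withinD (has_deriv_withinM DF1 DG2)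
    (has_deriv_withinM DF2 DG1)) => s.
  by rewrite ImM.
Qed.

Lemma cderiv_within_sum t (J : Type) (r : seq J) (P : pred J)
    (Fs : J -> R -> C) (dFs : J -> C) :
  (forall j, P j -> cderiv_within I (Fs j) t (dFs j)) ->
  cderiv_within I (fun s => \sum_(j <- r | P j) Fs j s) t (\sum_(j <- r | P j) dFs j).
Proof.
move=> dF; elim: r => [|j r IHr].
  by rewrite big_nil; under eq_fun do rewrite big_nil; exact: cderiv_within_cst.
rewrite big_cons; under eq_fun do rewrite big_cons.
by case: (P j) (dF j) => [/(_ isT)/cderiv_withinD|_]; last exact: IHr; apply.
Qed.

Lemma cderiv_within_prod t (J : eqType) (r : seq J) (Fs : J -> R -> C) (dFs : J -> C) :
  uniq r -> (forall j, cderiv_within I (Fs j) t (dFs j)) ->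
  cderiv_within I (fun s => \prod_(j <- r) Fs j s) t
    (\sum_(k <- r) \prod_(j <- r) (if j == k then dFs j else Fs j t)).
Proof.
move=> + dF; elim: r => [|j r IHr].
  by rewrite big_nil; under eq_fun do rewrite big_nil; move=> _; exact: cderiv_within_cst.
move=> /= /andP[jr ur]; under eq_fun do rewrite big_cons.
have -> : \sum_(k <- j :: r) \prod_(i <- j :: r) (if i == k then dFs i else Fs i t) =
    Fs j t * \sum_(k <- r) \prod_(i <- r) (if i == k then dFs i else Fs i t)
    + dFs j * \prod_(i <- r) Fs i t.
  rewrite big_cons big_cons eqxx addrC big_distrr; congr (_ + _).
    rewrite !big_seq; apply: eq_bigr => k kr.
    by rewrite big_cons; case: eqP kr jr => [-> ->|].
  by congr (_ * _); rewrite !big_seq; apply: eq_bigr => i ir; case: eqP ir jr => // -> ->.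
exact: cderiv_withinM (dF j) (IHr ur).
Qed.

Lemma cderiv_within_det t n (M : R -> 'M[C]_n) (D : 'M[C]_n) :
  (forall i j, cderiv_within I (fun s => M s i j) t (D i j)) ->
  cderiv_within I (fun s => \det (M s)) t (\tr (\adj (M t) *m D)).
Proof.
move=> dM.
have row_expansion : \tr (\adj (M t) *m D) =
    \sum_k \det (\matrix_(i, j) if i == k then D i j else M t i j).
  rewrite /mxtrace (eq_bigr (fun j => \sum_k D k j * cofactor (M t) k j)); last first.
    by move=> j _; rewrite mxE; apply: eq_bigr => k _; rewrite mxE mulrC.
  rewrite exchange_big /=; apply: eq_bigr => k _.
  rewrite (expand_det_row _ k); apply: eq_bigr => j _; rewrite mxE eqxx.
  congr (_ * (_ * \det _)); apply/matrixP => i j'.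
  by rewrite !mxE eq_sym (negbTE (neq_lift _ _)).
rewrite row_expansion (_ : \sum_k _ = \sum_(σ : 'S_n) (-1) ^+ σ *
    \sum_(k <- index_enum 'I_n) \prod_(i <- index_enum 'I_n)
      (if i == k then D i (σ i) else M t i (σ i))).
  apply: cderiv_within_sum => σ _.
  have := cderiv_withinM (cderiv_within_cst t ((-1) ^+ σ))
    (cderiv_within_prod (index_enum_uniq _) (fun i => dM i (σ i))).
  by rewrite mul0r addr0.
under [RHS]eq_bigr do rewrite mulr_sumr.
rewrite [RHS]exchange_big /=; apply: eq_bigr => k _.
by apply: eq_bigr => σ _; congr (_ * _); apply: eq_bigr => i _; rewrite mxE.
Qed.

End ComplexDerivative.

Lemma eigenvalue_det (F : fieldType) n (A : 'M[F]_n) a :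
  eigenvalue A a = (\det (a%:M - A) == 0).
Proof.
apply/eigenvalueP/det0P=> [[v Av_av v_nz] | [v v_nz Av_av]]; exists v => //.
  by rewrite mulmxBr Av_av mul_mx_scalar subrr.
by apply/eqP; rewrite -mul_mx_scalar eq_sym -subr_eq0 -mulmxBr Av_av.
Qed.

Lemma comm_mx_adj_subr (R : comNzRingType) n (A : 'M[R]_n) z :
  comm_mx (\adj (z%:M - A)) A.
Proof.
have : comm_mx (\adj (z%:M - A)) (z%:M - A) by rewrite /comm_mx mul_adj_mx mul_mx_adj.
by rewrite /comm_mx mulmxBr mulmxBl mul_mx_scalar mul_scalar_mx => /addrI/oppr_inj.
Qed.

Lemma mxtrace_mul_commutator (R : comNzRingType) n (X A Y : 'M[R]_n) :
  comm_mx X A -> \tr (X *m (A *m Y - Y *m A)) = 0.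
Proof.
move=> XA; rewrite mulmxBr raddfB /= [in T in _ - T]mulmxA [in T in _ - T]mxtrace_mulC.
by rewrite !mulmxA -XA subrr.
Qed.

Lemma lax_flow_det_constant (R : realType) n (I : set R) (A Y : R -> 'M[R[i]]_n)
    (z : R[i]) : is_interval I ->
  (forall t, I t -> forall i j,
     cderiv_within I (fun s => A s i j) t (commC (A t) (Y t) i j)) ->
  forall a b, I a -> I b -> \det (z%:M - A a) = \det (z%:M - A b).
Proof.
move=> iI flow; apply: cderiv_within0_constant => // t It.
rewrite -oppr0 -(mxtrace_mul_commutator (Y t) (comm_mx_adj_subr (A t) z)).
rewrite -raddfN /= -mulmxN.
apply: cderiv_within_det => i j.
have -> : (fun s => (z%:M - A s) i j) = fun s => z%:M i j - A s i j.
  by apply: funext => s; rewrite mxE [X in _ + X]mxE.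
rewrite [X in cderiv_within _ _ _ X]mxE -[X in cderiv_within _ _ _ X]add0r.
exact: cderiv_withinD (cderiv_within_cst I t (z%:M i j)) (cderiv_withinN (flow t It i j)).
Qed.

Theorem lemma4p3 (R : realType) (n : nat) (I : set R) (A : R -> 'M[R[i]]_n) :
  is_interval I -> I 0 -> solves_flow I A ->
  forall t, I t -> forall z : R[i], eigenvalue (A t) z = eigenvalue (A 0) z.
Proof.
move=> iI I0 flow t It z; rewrite !eigenvalue_det.
rewrite (@lax_flow_det_constant _ _ _ _ (fun s => A s *m adjC (A s)) _ iI _ t 0) //.
move=> s Is i j; have := flow s Is i j.
by rewrite /commC mulmxBr !mulmxA.
Qed.
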